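(* Let $f:X\to Y$ be a function between topological spaces, where $\gamma$ is a regular operation. Then $f$ is $\gamma$-semi-continuous if and only if for each $x\in X$ and each $\gamma$-open set $B\subseteq Y$ containing $f(x)$, there exists a $\gamma^{*}$-semi-open set $A\subseteq X$ such that $x\in A$ and $f(A)\subseteq B$.
   Context: Each of the spaces $X$, $Y$ carries an operation, both denoted $\gamma$: a map $V\mapsto V^\gamma$ from open sets to subsets with $V\subseteq V^\gamma$. In a space $Z$, for $A\subseteq Z$, $int_\gamma(A)=\{x\in A: \text{there is an open } N \text{ with } x\in N,\ N^\gamma\subseteq A\}$; $A$ is $\gamma$-open iff $A=int_\gamma(A)$. $cl_\gamma(A)$ is the set of $x\in Z$ such that $U^\gamma\cap A\neq\emptyset$ for every open $U\ni x$. $A$ is $\gamma^{*}$-semi-open if there is a $\gamma$-open $O$ with $O\subseteq A\subseteq cl_\gamma(O)$. $f$ is $\gamma$-semi-continuous if $f^{-1}(B)$ is $\gamma^{*}$-semi-open in $X$ for every $\gamma$-open $B$ in $Y$. $\gamma$ is regular if for every point $x$ and open neighbourhoods $U,V$ of $x$ there is an open neighbourhood $W$ of $x$ with $W^\gamma\subseteq U^\gamma\cap V^\gamma$. *)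

From mathcomp Require Import all_boot all_order.
From mathcomp Require Import all_classical topology.
Set Implicit Arguments. Unset Strict Implicit. Unset Printing Implicit Defensive.
Local Open Scope classical_set_scope.

Section GammaDefs.
Context {T : topologicalType}.
Implicit Types (gam : set T -> set T) (A : set T).

(* gam is an operation: V ⊆ V^gam for every open V (only values on open sets matter) *)
Definition is_operation gam := forall V : set T, open V -> V `<=` gam V.

Definition regular_op gam := forall (x : T) (U V : set T),
  open U -> U x -> open V -> V x ->
  exists W : set T, [/\ open W, W x & gam W `<=` gam U `&` gam V].

Definition int_gam gam A : set T :=
  [set x | A x /\ exists N : set T, [/\ open N, N x & gam N `<=` A]].

Definition gamma_open gam A := A = int_gam gam A.

Definition cl_gam gam A : set T :=
  [set x | forall U : set T, open U -> U x -> gam U `&` A !=set0].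

Definition gamma_star_semi_open gam A :=
  exists O : set T, [/\ gamma_open gam O, O `<=` A & A `<=` cl_gam gam O].

End GammaDefs.

Definition gamma_semi_continuous {X Y : topologicalType}
  (gX : set X -> set X) (gY : set Y -> set Y) (f : X -> Y) :=
  forall B : set Y, gamma_open gY B -> gamma_star_semi_open gX (f @^-1` B).

(* Unions of gamma*-semi-open sets are gamma*-semi-open, since gamma-open sets
   are closed under unions and cl_gam is monotone.  Hence if every point of
   f^-1(B) has a gamma*-semi-open neighbourhood mapped into B, then f^-1(B) is
   the union of these neighbourhoods and is itself gamma*-semi-open. *)
From mathcomp Require Import all_boot all_order.
From mathcomp Require Import all_classical topology.
Local Open Scope classical_set_scope.

Section GammaUnions.
Context {T : topologicalType} (gam : set T -> set T).

Lemma gamma_open_bigcup (I : Type) (D : set I) (F : I -> set T) :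
  (forall i, D i -> gamma_open gam (F i)) ->
  gamma_open gam (\bigcup_(i in D) F i).
Proof.
move=> gF; apply/seteqP; split; last by move=> z [].
move=> z [i Di Fiz]; split; first by exists i.
have [_ [N [oN Nz gNF]]] : int_gam gam (F i) z by rewrite -gF.
by exists N; split => // w /gNF; exists i.
Qed.

Lemma cl_gam_subset (A B : set T) : A `<=` B -> cl_gam gam A `<=` cl_gam gam B.
Proof.
move=> AB x clAx U oU Ux; have [w [gUw Aw]] := clAx U oU Ux.
by exists w; split => //; apply: AB.
Qed.

Lemma gamma_star_semi_open_bigcup (I : Type) (D : set I) (F : I -> set T) :
  (forall i, D i -> gamma_star_semi_open gam (F i)) ->
  gamma_star_semi_open gam (\bigcup_(i in D) F i).
Proof.
move=> sF.
have /choice[O HO] : forall i, exists Oi : set T, D i ->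
    [/\ gamma_open gam Oi, Oi `<=` F i & F i `<=` cl_gam gam Oi].
  move=> i; have [Di|nDi] := pselect (D i); last by exists set0 => /nDi.
  by have [Oi HOi] := sF i Di; exists Oi.
exists (\bigcup_(i in D) O i); split.
- by apply: gamma_open_bigcup => i /HO [].
- by move=> z [i Di Oiz]; have [_ OF _] := HO i Di; exists i => //; apply: OF.
- move=> z [i Di Fiz]; have [_ _ FiO] := HO i Di.
  by apply: (cl_gam_subset (O i)) (FiO z Fiz) => w Oiw; exists i.
Qed.

End GammaUnions.

Theorem theorem4p2 (X Y : topologicalType)
  (gX : set X -> set X) (gY : set Y -> set Y)
  (opX : is_operation gX) (opY : is_operation gY)
  (regX : regular_op gX) (regY : regular_op gY)
  (f : X -> Y) :
  gamma_semi_continuous gX gY f <->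
  (forall (x : X) (B : set Y), gamma_open gY B -> B (f x) ->
     exists A : set X, [/\ gamma_star_semi_open gX A, A x & f @` A `<=` B]).
Proof.
split.
  move=> fcont x B gB Bfx; exists (f @^-1` B); split => //; first exact: fcont.
  by move=> y [z Bfz <-].
move=> Hloc B gB.
have /choice[A HA] : forall x, exists Ax : set X, B (f x) ->
    [/\ gamma_star_semi_open gX Ax, Ax x & f @` Ax `<=` B].
  move=> x; have [Bfx|nBfx] := pselect (B (f x)); last by exists set0 => /nBfx.
  by have [Ax HAx] := Hloc x B gB Bfx; exists Ax.
have -> : f @^-1` B = \bigcup_(x in f @^-1` B) A x.
  apply/seteqP; split; first by move=> x Bfx; exists x => //; have [] := HA x Bfx.
  by move=> z [x Bfx Axz]; have [_ _ fAB] := HA x Bfx; apply: fAB; exists z.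
by apply: gamma_star_semi_open_bigcup => x /HA [].
Qed.
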